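(* Let $k_1,k_2$ be positive integers and let $D$ be a digraph containing no subdivision of $C(k_1,k_2)$ as a subdigraph. Then $\chi(D)\le 3\,\alpha(D)\,k$, where $k=\max\{k_1,k_2\}$ and $\alpha(D)$ is the maximum size of a stable set of (the underlying graph of) $D$.
   Context: Digraphs are orientations of finite simple graphs (no loops, no multiple arcs, no pair of opposite arcs). The chromatic number $\chi(D)$ of a digraph is the chromatic number of its underlying undirected graph. For positive integers $k_1,k_2$, $C(k_1,k_2)$ is the oriented cycle formed by two internally disjoint directed $xy$-paths of lengths $k_1$ and $k_2$. A subdivision of a digraph $H$ is obtained by replacing each arc $(u,v)$ by a directed $uv$-path of length at least $1$, these paths being internally disjoint. *)

From mathcomp Require Import all_boot.
Set Implicit Arguments. Unset Strict Implicit. Unset Printing Implicit Defensive.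

Definition oriented_graph (T : finType) (a : rel T) : Prop :=
  irreflexive a /\ (forall x y, a x y -> ~~ a y x).

Definition uadj (T : finType) (a : rel T) : rel T := fun x y => a x y || a y x.

Definition colorable (T : finType) (a : rel T) (n : nat) : bool :=
  [exists f : {ffun T -> 'I_n}, [forall x, forall y, uadj a x y ==> (f x != f y)]].

Lemma colorable_card (T : finType) (a : rel T) (ha : irreflexive a) :
  exists n, colorable a n.
Proof.
exists #|T|; apply/existsP; exists [ffun x => enum_rank x].
apply/forallP => x; apply/forallP => y; apply/implyP => hxy.
rewrite !ffunE; apply/negP => /eqP /enum_rank_inj exy.
by move: hxy; rewrite exy /uadj ha.
Qed.

Definition chi (T : finType) (a : rel T) (ha : irreflexive a) : nat :=
  ex_minn (colorable_card ha).

Definition stable (T : finType) (a : rel T) (S : {set T}) : bool :=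
  [forall x in S, forall y in S, ~~ uadj a x y].

Definition alpha (T : finType) (a : rel T) : nat :=
  \max_(S : {set T} | stable a S) #|S|.

(* D contains a subdivision of C(k1,k2) as a subdigraph: there are vertices x, y
   and two internally disjoint directed xy-paths  x :: p1 ++ [y]  and
   x :: p2 ++ [y]  of lengths >= k1 and >= k2 respectively, which are distinct
   (they cannot both be the single arc xy). *)
Definition has_subdiv_C (T : finType) (a : rel T) (k1 k2 : nat) : Prop :=
  exists (x y : T) (p1 p2 : seq T),
    [/\ path a x (rcons p1 y), path a x (rcons p2 y),
        uniq (x :: rcons p1 y), uniq (x :: rcons p2 y)
      & [/\ [disjoint p1 & p2], k1 <= (size p1).+1, k2 <= (size p2).+1
          & ((p1 != [::]) || (p2 != [::]))]].

(** By the Gallai-Milgram theorem the vertices of [D] are covered by at most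
    [alpha D] disjoint directed paths.  Colour a vertex by its path, by its
    position on that path modulo [k], and by a colour in {0, 1, 2}.  Vertices of
    one path with congruent positions lie at distance at least [k] along it, so
    two crossing chords [x1 x3] and [x2 x4] between such vertices
    ([x1 < x2 < x3 < x4] on the path) close, together with segments of the path,
    two internally disjoint directed paths of length at least [k] between two of
    the four vertices: a subdivision of [C(k1, k2)].  Without crossing chords a
    graph on a linearly ordered vertex set is 2-degenerate, hence 3-colourable. *)

From mathcomp Require Import all_boot zify.
Set Implicit Arguments. Unset Strict Implicit. Unset Printing Implicit Defensive.

Section IndexedPath.

Variables (T : finType) (a : rel T) (f : nat -> T) (n : nat).
Hypothesis f_path : forall m, m.+1 < n -> a (f m) (f m.+1).
Hypothesis f_inj : {in [pred m | m < n] &, injective f}.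

Local Notation b := (relpre f a).

Lemma arc_pred m : 0 < m < n -> b m.-1 m.
Proof. by case: m => // m /= /andP[_]; apply: f_path. Qed.

Lemma path_iota_rcons i l v :
  i + l < n -> b (i + l) v -> path b i (rcons (iota i.+1 l) v).
Proof.
elim: l i => [|l IHl] i /=; first by rewrite addn0 => _ ->.
rewrite addnS => il_n b_v; rewrite f_path /=; last by lia.
by apply: IHl; rewrite addSn.
Qed.

Lemma path_along u v : u < v < n -> path b u (rcons (iota u.+1 (v - u.+1)) v).
Proof.
move=> /andP[uv vn]; apply: path_iota_rcons; first by lia.
have -> : u + (v - u.+1) = v.-1 by lia.
by apply: arc_pred; lia.
Qed.

Lemma path_chord u v i j : b u i -> b j v -> i <= j < n ->
  path b u (rcons (iota i (j - i).+1) v).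
Proof.
move=> ui jv ijn /=; apply/andP; split=> //; apply: path_iota_rcons; first by lia.
by have -> : i + (j - i) = j by lia.
Qed.

Lemma subdiv_of_intervals k1 k2 u v i1 l1 i2 l2 :
  path b u (rcons (iota i1 l1) v) -> path b u (rcons (iota i2 l2) v) ->
  u < n -> v < n -> u != v -> i1 + l1 <= n -> i2 + l2 <= n ->
  (u < i1) || (i1 + l1 <= u) -> (v < i1) || (i1 + l1 <= v) ->
  (u < i2) || (i2 + l2 <= u) -> (v < i2) || (i2 + l2 <= v) ->
  (i1 + l1 <= i2) || (i2 + l2 <= i1) ->
  k1 <= l1.+1 -> k2 <= l2.+1 -> 0 < l1 + l2 -> has_subdiv_C a k1 k2.
Proof.
move=> p1 p2 un vn uv l1n l2n u1 v1 u2 v2 disj k1l k2l l12.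
have inj_on s : all (gtn n) s -> {in s &, injective f}.
  by move=> /allP sn x y /sn xn /sn yn; apply: f_inj; rewrite inE.
have uniq_ends i l : i + l <= n -> (u < i) || (i + l <= u) -> (v < i) || (i + l <= v) ->
    uniq (f u :: rcons (map f (iota i l)) (f v)).
  move=> ln ui vi; rewrite -map_rcons -(map_cons f) (map_inj_in_uniq (inj_on _ _)).
    by rewrite /= mem_rcons !inE rcons_uniq !mem_iota iota_uniq; lia.
  by apply/allP => m; rewrite inE mem_rcons inE mem_iota /gtn /=; lia.
exists (f u), (f v), (map f (iota i1 l1)), (map f (iota i2 l2)).
rewrite !uniq_ends // -!map_rcons !path_map !size_map !size_iota; split=> //; split=> //.
- rewrite disjoint_has; apply/hasPn => _ /mapP[m m2 ->].
  apply/mapP => -[m' m1 /f_inj]; rewrite !inE; move: m1 m2; rewrite !mem_iota.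
  lia.
- by rewrite -!size_eq0 !size_map !size_iota; lia.
Qed.

Lemma crossing_chords_subdiv k1 k2 i1 i2 i3 i4 :
  i1 < i2 < i3 -> i3 < i4 < n -> maxn k1 k2 <= i2 - i1 -> maxn k1 k2 <= i4 - i3 ->
  uadj a (f i1) (f i3) -> uadj a (f i2) (f i4) -> has_subdiv_C a k1 k2.
Proof.
move=> /andP[i12 i23] /andP[i34 i4n] gap12 gap34.
case/orP=> [e13|e31] /orP[e24|e42].
- apply: (subdiv_of_intervals (u := i1) (v := i4) (i1 := i3) (l1 := (i4.-1 - i3).+1)
    (i2 := i1.+1) (l2 := (i2 - i1.+1).+1)); try lia.
  + by apply: path_chord => //; [apply: arc_pred|]; lia.
  + by apply: path_chord => //; [apply: f_path|]; lia.
- apply: (subdiv_of_intervals (u := i1) (v := i2) (i1 := i1.+1) (l1 := i2 - i1.+1)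
    (i2 := i3) (l2 := (i4 - i3).+1)); try lia.
  + by apply: path_along; lia.
  + by apply: path_chord => //; lia.
- apply: (subdiv_of_intervals (u := i3) (v := i4) (i1 := i1) (l1 := (i2 - i1).+1)
    (i2 := i3.+1) (l2 := i4 - i3.+1)); try lia.
  + by apply: path_chord => //; lia.
  + by apply: path_along; lia.
- apply: (subdiv_of_intervals (u := i3) (v := i2) (i1 := i1) (l1 := (i2.-1 - i1).+1)
    (i2 := i3.+1) (l2 := (i4 - i3.+1).+1)); try lia.
  + by apply: path_chord => //; [apply: arc_pred|]; lia.
  + by apply: path_chord => //; [apply: f_path|]; lia.
Qed.

End IndexedPath.

Section Noncrossing.

Variables (X : finType) (E : rel X) (h : X -> nat) (S : {set X}).
Hypothesis E_sym : symmetric E.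
Hypothesis E_irr : irreflexive E.
Hypothesis h_inj : {in S &, injective h}.
Hypothesis noncrossing : forall x1 x2 x3 x4, x1 \in S -> x2 \in S -> x3 \in S -> x4 \in S ->
  h x1 < h x2 < h x3 -> h x3 < h x4 -> E x1 x3 -> E x2 x4 -> False.

Let N v := [set w in S | E v w].
Let between u w := [exists z in S, h u < h z < h w].

Lemma card_nbhd_le2 v : v \in S ->
    (forall x y, x \in N v -> y \in N v -> h x < h y < h v -> False) ->
    (forall x y, x \in N v -> y \in N v -> h v < h x < h y -> False) ->
  #|N v| <= 2.
Proof.
move=> vS left right; rewrite -card_bool.
apply: (@leq_card_in _ _ (fun x => h x < h v)) => x y xN yN /= side.
have off w : w \in N v -> h w != h v.
  rewrite inE => /andP[wS vw]; apply/eqP => /h_inj eq_wv.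
  by move: vw; rewrite eq_wv ?E_irr.
have xS : x \in S by move: xN; rewrite inE => /andP[].
have yS : y \in S by move: yN; rewrite inE => /andP[].
have [sx sy] := (off x xN, off y yN).
case: (ltngtP (h x) (h y)) => [xy|yx|]; last exact: h_inj.
- by exfalso; case: (ltnP (h y) (h v)) => yv;
    [apply: (left x y)|apply: (right x y)] => //; lia.
- by exfalso; case: (ltnP (h x) (h v)) => xv;
    [apply: (left y x)|apply: (right y x)] => //; lia.
Qed.

Lemma low_degree_no_long v : v \in S ->
    (forall u w, u \in S -> w \in S -> E u w -> h u < h w -> ~~ between u w) ->
  #|N v| <= 2.
Proof.
move=> vS no_long; apply: card_nbhd_le2 => // x y;
  rewrite !inE => /andP[xS vx] /andP[yS vy] /andP[lt1 lt2].
- apply: (negP (no_long x v xS vS _ (ltn_trans lt1 lt2))); first by rewrite E_sym.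
  by apply/exists_inP; exists y; rewrite ?lt1.
- apply: (negP (no_long v y vS yS vy (ltn_trans lt1 lt2))).
  by apply/exists_inP; exists x; rewrite ?lt1.
Qed.

(* [v] is chosen as the first vertex strictly between the ends of a shortest
   edge that jumps over some vertex; it has at most one neighbour on each side. *)
Lemma low_degree_shortest_long u w : u \in S -> w \in S -> E u w -> h u < h w ->
    between u w ->
    (forall u' w', u' \in S -> w' \in S -> E u' w' -> h u' < h w' -> between u' w' ->
       h w - h u <= h w' - h u') ->
  exists2 v, v \in S & #|N v| <= 2.
Proof.
move=> uS wS uw ltuw /exists_inP[z0 z0S z0uw] shortest.
have z0Z : z0 \in [set z in S | h u < h z < h w] by rewrite inE z0S.
case: (arg_minnP h z0Z) => v vZ first_v.
have {vZ} : v \in [set z in S | h u < h z < h w] := vZ.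
rewrite inE => /andP[vS /andP[uv vw]].
exists v => //; apply: card_nbhd_le2 => // x y; rewrite !inE => /andP[xS vx] /andP[yS vy].
- have left_u t : t \in S -> E v t -> h t < h v -> t = u.
    move=> tS vt tv; case: (ltngtP (h t) (h u)) => [tu|ut|]; last exact: h_inj.
    + by case: (noncrossing tS uS vS wS _ vw _ uw); rewrite ?tu // E_sym.
    + have tZ : t \in [set z in S | h u < h z < h w].
        by rewrite inE tS ut (ltn_trans tv vw).
      by have := first_v t tZ; rewrite leqNgt tv.
  move=> /andP[xy yv]; have := xy.
  by rewrite (left_u x xS vx (ltn_trans xy yv)) (left_u y yS vy yv) ltnn.
- move=> /andP[vx' xy]; case: (ltnP (h w) (h y)) => [wy|yw].
    by apply: (noncrossing uS vS wS yS _ wy uw vy); rewrite uv.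
  have btw_vy : between v y by apply/exists_inP; exists x; rewrite ?vx'.
  have := shortest v y vS yS vy (ltn_trans vx' xy) btw_vy.
  by clear -uv yw vx' xy; lia.
Qed.

Lemma low_degree_vertex : S != set0 -> exists2 v, v \in S & #|N v| <= 2.
Proof.
move=> /set0Pn[v0 v0S].
case: (boolP [exists u in S, exists w in S, [&& E u w, h u < h w & between u w]]);
    last first.
  move=> no_long; exists v0 => //; apply: low_degree_no_long => // u w uS wS uw ltuw.
  apply: contra no_long => btw; apply/exists_inP; exists u => //.
  by apply/exists_inP; exists w; rewrite ?uw ?ltuw.
pose long m := [exists u in S, exists w in S,
  [&& E u w, h u < h w, between u w & h w - h u == m]].
move=> /exists_inP[u uS /exists_inP[w wS /and3P[uw ltuw btw]]].
have : exists m, long m.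
  exists (h w - h u); apply/exists_inP; exists u => //.
  by apply/exists_inP; exists w; rewrite ?uw ?ltuw ?btw ?eqxx.
case/ex_minnP => {u uS w wS uw ltuw btw} _
  /exists_inP[u uS /exists_inP[w wS /and4P[uw ltuw btw /eqP <-]]] shortest.
apply: (low_degree_shortest_long uS wS uw ltuw btw) => u' w' u'S w'S uw' ltuw' btw'.
apply: shortest; apply/exists_inP; exists u' => //.
by apply/exists_inP; exists w'; rewrite ?uw' ?ltuw' ?btw' ?eqxx.
Qed.

End Noncrossing.

Lemma degenerate_coloring (X : finType) (E : rel X) d :
  symmetric E -> irreflexive E ->
  (forall S : {set X}, S != set0 -> exists2 v, v \in S & #|[set w in S | E v w]| <= d) ->
  exists g : X -> 'I_d.+1, forall x y, E x y -> g x != g y.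
Proof.
move=> E_sym E_irr degenerate.
suff /(_ [set: X]) [g gP] (S : {set X}) :
    exists g : X -> 'I_d.+1, {in S &, forall x y, E x y -> g x != g y}.
  by exists g => x y; apply: gP; rewrite inE.
elim: {S}_.+1 {-2}S (ltnSn #|S|) => // N IH S; rewrite ltnS => SN.
have [->|/degenerate[v vS deg_v]] := eqVneq S set0.
  by exists (fun=> ord0) => x; rewrite inE.
have [|g' g'P] := IH (S :\ v); first by move: SN; rewrite (cardsD1 v S) vS.
set used := g' @: [set w in S | E v w].
have /subsetPn[c _ c_unused] : ~~ ([set: 'I_d.+1] \subset used).
  apply/negP => /subset_leq_card; rewrite cardsT card_ord leqNgt ltnS.
  by rewrite (leq_trans (leq_imset_card _ _) deg_v).
exists (fun x => if x == v then c else g' x) => x y xS yS xy.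
have c_new w : w \in S -> E v w -> c != g' w.
  by move=> wS vw; apply: contraNneq c_unused => ->; apply: imset_f; rewrite inE wS.
case: (x =P v) => [ex|/eqP xv]; case: (y =P v) => [ey|/eqP yv].
- by rewrite ex ey E_irr in xy.
- by apply: c_new; rewrite // -ex.
- by rewrite eq_sym; apply: c_new; rewrite // E_sym -ey.
- by apply: g'P; rewrite // !inE ?xv ?yv.
Qed.

Section Coloring.

Variables (T : finType) (a : rel T).
Hypothesis ha : irreflexive a.

Lemma uadj_sym : symmetric (uadj a).
Proof. by move=> x y; rewrite /uadj orbC. Qed.

Lemma uadj_irr : irreflexive (uadj a).
Proof. by move=> x; rewrite /uadj ha. Qed.

Lemma chi_le n : colorable a n -> chi ha <= n.
Proof. by rewrite /chi; case: ex_minnP => m _; apply. Qed.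

Lemma colorable_of_coloring (C : finType) (col : T -> C) :
  (forall x y, uadj a x y -> col x != col y) -> colorable a #|C|.
Proof.
move=> proper; apply/existsP; exists [ffun x => enum_rank (col x)].
apply/forallP => x; apply/forallP => y; apply/implyP => xy.
by rewrite !ffunE (inj_eq enum_rank_inj) proper.
Qed.

Lemma colorable_by_classes (C : finType) (cls : T -> C) d :
  (forall S : {set T}, S != set0 -> {in S &, forall x y, cls x = cls y} ->
     exists2 v, v \in S & #|[set w in S | uadj a v w]| <= d) ->
  colorable a (#|C| * d.+1).
Proof.
move=> low_deg; pose E x y := uadj a x y && (cls x == cls y).
have [|||g gP] := @degenerate_coloring T E d.
- by move=> x y; rewrite /E uadj_sym eq_sym.
- by move=> x; rewrite /E uadj_irr.
- move=> S /set0Pn[v0 v0S].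
  have [||v] := low_deg [set w in S | cls w == cls v0].
  + by apply/set0Pn; exists v0; rewrite inE v0S /=.
  + by move=> x y; rewrite !inE => /andP[_ /eqP ->] /andP[_ /eqP].
  rewrite inE => /andP[vS /eqP cv] deg_v; exists v => //.
  apply: leq_trans deg_v; apply: subset_leq_card; apply/subsetP => w.
  by rewrite !inE /E cv => /andP[-> /andP[-> /eqP ->]]; rewrite eqxx.
rewrite -[d.+1]card_ord -card_prod.
apply: (colorable_of_coloring (col := fun x => (cls x, g x))) => x y xy.
apply/negP => /eqP[cxy gxy].
by have := gP x y; rewrite /E xy cxy eqxx gxy eqxx => /(_ isT).
Qed.

End Coloring.

(* A path is stored as its first vertex and the rest of it, so that it is never
   empty. *)
Definition verts (T : Type) (Ps : seq (T * seq T)) := flatten [seq p.1 :: p.2 | p <- Ps].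

Definition heads (T : Type) (Ps : seq (T * seq T)) := map fst Ps.

Definition path_cover (T : finType) (r : rel T) (U : {set T}) (Ps : seq (T * seq T)) :=
  [/\ all (fun p => path r p.1 p.2) Ps, uniq (verts Ps) & verts Ps =i U].

Lemma size_cons_rem (A : eqType) (s : seq A) x y : x \in s -> size (y :: rem x s) = size s.
Proof. by move/perm_to_rem/perm_size ->. Qed.

Lemma pigeonhole_cons (A : eqType) (s h : seq A) z x :
  uniq s -> uniq h -> {subset s <= z :: h} -> x \in h -> size h <= size s ->
  (z \in s) || (x \in s).
Proof.
move=> uniq_s uniq_h sub xh; apply: contraTT => /norP[zs xs]; rewrite -ltnNge.
have sub' : {subset s <= rem x h}.
  move=> t ts; rewrite (mem_rem_uniq _ uniq_h) inE.
  have := sub t ts; rewrite inE => /predU1P[tz|->]; first by rewrite -tz ts in zs.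
  by rewrite andbT; apply: contraNneq xs => <-.
by rewrite -(size_cons_rem x xh); apply: uniq_leq_size uniq_s sub'.
Qed.

Section Heads.

Variable T : eqType.
Implicit Types (Ps Qs : seq (T * seq T)).

Lemma perm_verts Ps Qs : perm_eq Ps Qs -> perm_eq (verts Ps) (verts Qs).
Proof. by move=> PQ; apply/perm_flatten/perm_map. Qed.

Lemma perm_heads_rem Ps p : p \in Ps -> perm_eq (heads Ps) (p.1 :: heads (rem p Ps)).
Proof. by move/perm_to_rem/(perm_map fst). Qed.

Lemma mem_heads_rem Ps p t : t \in heads (rem p Ps) -> t \in heads Ps.
Proof. by move/mapP=> [q /mem_rem qPs ->]; apply: map_f. Qed.

Lemma head_in_verts Ps p : p \in Ps -> p.1 \in verts Ps.
Proof. by move=> pPs; apply/flattenP; exists (p.1 :: p.2); [apply: map_f|exact: mem_head]. Qed.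

Lemma uniq_heads Ps : uniq (verts Ps) -> uniq (heads Ps).
Proof.
elim: Ps => // p Ps IH /= /andP[p_notin]; rewrite cat_uniq => /and3P[_ _ /IH ->].
rewrite andbT; apply: contra p_notin => /mapP[q qPs ->].
by rewrite mem_cat head_in_verts ?orbT.
Qed.

Lemma heads_rem_sub Qs (H : seq T) z w sq :
  uniq (heads Qs) -> {subset heads Qs <= z :: H} -> (w, sq) \in Qs ->
  (z \in heads Qs -> w = z) -> {subset heads (rem (w, sq) Qs) <= H}.
Proof.
move=> uniq_hQ sub wQs zw t tH; have tQ := mem_heads_rem tH.
have /andP[w_notin _] : uniq (w :: heads (rem (w, sq) Qs)).
  by rewrite -(perm_uniq (perm_heads_rem wQs)).
have := sub t tQ; rewrite inE => /predU1P[tz|//].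
have wt : w = t by rewrite zw -tz.
by move: w_notin; rewrite {1}wt tH.
Qed.

End Heads.
Section PathCover.

Variables (T : finType) (r : rel T).
Implicit Types (Ps Qs : seq (T * seq T)) (U : {set T}).

Lemma path_cover_rem_head U Ps y s : path_cover r U Ps -> (y, s) \in Ps ->
  path_cover r (U :\ y)
    ((if s is z :: s' then [:: (z, s')] else [::]) ++ rem (y, s) Ps).
Proof.
move=> [Ps_path Ps_uniq Ps_U] yPs.
have perm_v : perm_eq (verts Ps) (y :: s ++ verts (rem (y, s) Ps)).
  exact: perm_verts (perm_to_rem yPs).
rewrite /path_cover.
have -> : verts ((if s is z :: s' then [:: (z, s')] else [::]) ++ rem (y, s) Ps) =
    s ++ verts (rem (y, s) Ps) by case: s {perm_v yPs}.
have := Ps_uniq; rewrite (perm_uniq perm_v) => /andP[y_notin uniq_v].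
split=> //.
- rewrite all_cat; apply/andP; split; last by apply/allP => p /mem_rem; apply: (allP Ps_path).
  by case: s yPs {perm_v y_notin uniq_v} => //= z s' /(allP Ps_path) /= /andP[_ ->].
- move=> v; rewrite in_setD1 -Ps_U (perm_mem perm_v) inE.
  by case: eqVneq => [->|]; rewrite ?(negPf y_notin).
Qed.

Lemma path_cover_prepend U Qs y w sq : path_cover r (U :\ y) Qs -> (w, sq) \in Qs ->
  r y w -> y \in U -> path_cover r U ((y, w :: sq) :: rem (w, sq) Qs).
Proof.
move=> [Qs_path Qs_uniq Qs_U] wQs yw yU.
have perm_v : perm_eq (verts ((y, w :: sq) :: rem (w, sq) Qs)) (y :: verts Qs).
  by rewrite /= perm_cons perm_sym (perm_verts (perm_to_rem wQs)).
have y_notin : y \notin verts Qs by rewrite Qs_U in_setD1 eqxx.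
split.
- rewrite /= yw (allP Qs_path _ wQs) /=.
  by apply/allP => p /mem_rem; apply: (allP Qs_path).
- by rewrite (perm_uniq perm_v) /= y_notin.
- move=> v; rewrite (perm_mem perm_v) inE Qs_U in_setD1.
  by case: eqVneq => [->|].
Qed.

Hypothesis r_irr : irreflexive r.

Lemma heads_not_stable U Ps : path_cover r U Ps -> alpha r < size Ps ->
  exists x y, [/\ x \in heads Ps, y \in heads Ps & r y x].
Proof.
move=> [_ /uniq_heads uniq_h _] lt_alpha.
have : ~~ stable r [set x in heads Ps].
  apply: contraTN lt_alpha => st; rewrite -leqNgt.
  have := @leq_bigmax_cond _ (stable r) (fun S => #|S|) _ st.
  by rewrite cardsE (card_uniqP uniq_h) size_map.
case/forallPn => x; rewrite negb_imply inE => /andP[xH /forallPn[y]].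
rewrite negb_imply negbK inE => /andP[yH /orP[xy|yx]].
- by exists y, x.
- by exists x, y.
Qed.

(* The Gallai-Milgram step: the head [y] of some path has an arc to the head
   [x] of another one; remove [y], shrink the cover of the rest by induction,
   and put [y] back in front of the path now starting at its successor [z] on
   its old path, or else at [x]. *)
Lemma path_cover_shrink U Ps : path_cover r U Ps -> alpha r < size Ps ->
  exists Qs, [/\ path_cover r U Qs, size Qs = (size Ps).-1 & {subset heads Qs <= heads Ps}].
Proof.
elim: {U}_.+1 {-2}U (ltnSn #|U|) Ps => // N IH U; rewrite ltnS => UN Ps cover lt_alpha.
have [x [y [xH yH yx]]] := heads_not_stable cover lt_alpha.
have uniq_h : uniq (heads Ps) by case: cover => _ /uniq_heads.
have uniq_Ps : uniq Ps := map_uniq uniq_h.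
case/mapP: yH => -[y' s] yPs /= eq_y; subst y'.
case/mapP: xH => -[x' sx] xPs /= eq_x; subst x'.
have yU : y \in U by case: cover => _ _ <-; apply: (head_in_verts yPs).
have cover' := path_cover_rem_head cover yPs.
suff [Qs [w [sq [coverQ sizeQ wQs yw headsQ]]]] : exists Qs w sq,
    [/\ path_cover r (U :\ y) Qs, size Qs = (size Ps).-1, (w, sq) \in Qs, r y w
      & {subset heads (rem (w, sq) Qs) <= heads Ps}].
  exists ((y, w :: sq) :: rem (w, sq) Qs); split.
  - exact: path_cover_prepend.
  - by rewrite size_cons_rem.
  - by move=> t; rewrite inE => /predU1P[->|/headsQ //]; apply: (map_f fst yPs).
have xy : (x, sx) != (y, s) by apply: contraTneq yx => -[->]; rewrite r_irr.
have xPs' : (x, sx) \in rem (y, s) Ps by rewrite (mem_rem_uniq _ uniq_Ps) inE xy.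
case: s yPs cover' xy xPs' => [|z s'] yPs cover' xy xPs'.
  exists (rem (y, [::]) Ps), x, sx; split=> //; first by rewrite size_rem.
  by move=> t /mem_heads_rem /mem_heads_rem.
set Ps' := rem (y, z :: s') Ps.
have [||Qs [coverQ sizeQ headsQ]] := IH (U :\ y) _ ((z, s') :: Ps') cover'.
- by move: UN; rewrite (cardsD1 y U) yU.
- by rewrite size_cons_rem.
rewrite size_cons_rem // in sizeQ.
have uniq_hQ : uniq (heads Qs) by case: coverQ => _ /uniq_heads.
have sub_Ps w sq : (w, sq) \in Qs -> (z \in heads Qs -> w = z) ->
    {subset heads (rem (w, sq) Qs) <= heads Ps}.
  by move=> wQs zw t /(heads_rem_sub uniq_hQ headsQ wQs zw) /mem_heads_rem.
case: (boolP (z \in heads Qs)) => [zQ|z_notin].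
  case/mapP: (zQ) => -[z' sq] zQs /= ez; subst z'.
  exists Qs, z, sq; split=> //; last exact: sub_Ps.
  by case: cover => /allP/(_ _ yPs) /= /andP[].
have uniq_hPs' : uniq (heads Ps').
  exact: subseq_uniq (map_subseq fst (rem_subseq _ _)) uniq_h.
have := pigeonhole_cons uniq_hQ uniq_hPs' headsQ (map_f fst xPs').
rewrite (negPf z_notin) !size_map sizeQ size_rem // => /(_ (leqnn _)) /mapP[[x' sq] xQs /= ex].
subst x'; exists Qs, x, sq; split=> //.
by apply: sub_Ps => // zQ; rewrite zQ in z_notin.
Qed.

Theorem gallai_milgram : exists Ps, path_cover r [set: T] Ps /\ size Ps <= alpha r.
Proof.
have [Ps cover] : exists Ps, path_cover r [set: T] Ps.
  exists [seq (v, [::]) | v <- enum T]; rewrite /path_cover.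
  have -> : verts [seq (v, [::]) | v <- enum T] = enum T.
    by rewrite /verts -map_comp flatten_seq1.
  split; first by apply/allP => _ /mapP[v _ ->].
    exact: enum_uniq.
  by move=> v; rewrite mem_enum in_setT.
have [n] : exists n, size Ps < n by exists (size Ps).+1.
elim: n Ps cover => // n IH Ps cover; rewrite ltnS => size_n.
case: (leqP (size Ps) (alpha r)) => [le_alpha|lt_alpha]; first by exists Ps.
have [Qs [coverQ sizeQ _]] := path_cover_shrink cover lt_alpha.
by apply: IH coverQ _; rewrite sizeQ; lia.
Qed.

End PathCover.

Lemma eq_mod_leq_subn K i j : 0 < K -> i < j -> i = j %[mod K] -> K <= j - i.
Proof.
move=> K_gt0 ij /eqP ij_mod; apply: dvdn_leq; first by rewrite subn_gt0.
by rewrite -eqn_mod_dvd ?(ltnW ij) // eq_sym.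
Qed.

Lemma uniq_flatten_mem (A : eqType) (ss : seq (seq A)) s :
  uniq (flatten ss) -> s \in ss -> uniq s.
Proof.
elim: ss => //= s' ss IH; rewrite cat_uniq => /and3P[uniq_s' _ /IH uniq_ss].
by rewrite inE => /predU1P[->|/uniq_ss].
Qed.

Section PathPartition.

Variables (T : finType) (a : rel T) (k1 k2 : nat).
Hypothesis ha : irreflexive a.
Hypothesis K_gt0 : 0 < maxn k1 k2.
Hypothesis no_subdiv : ~ has_subdiv_C a k1 k2.
Variable Ls : seq (seq T).
Hypothesis Ls_uniq : uniq (flatten Ls).
Hypothesis Ls_cover : forall v, v \in flatten Ls.
Hypothesis Ls_sorted : all (sorted a) Ls.

Local Notation K := (maxn k1 k2).

Let pidx v := find (fun L => v \in L) Ls.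
Let path_of v := nth [::] Ls (pidx v).
Let pos v := index v (path_of v).

Let has_path_of v : has (fun L => v \in L) Ls.
Proof. by have /flattenP[L LLs vL] := Ls_cover v; apply/hasP; exists L. Qed.

Let pidx_lt v : pidx v < size Ls.
Proof. by rewrite -has_find. Qed.

Let mem_path_of v : v \in path_of v.
Proof. exact: nth_find (has_path_of v). Qed.

Let path_of_in v : path_of v \in Ls.
Proof. exact: mem_nth. Qed.

Definition path_class v : 'I_(size Ls) * 'I_K :=
  (Ordinal (pidx_lt v), Ordinal (ltn_pmod (pos v) K_gt0)).

Lemma path_class_low_degree (S : {set T}) :
  S != set0 -> {in S &, forall x y, path_class x = path_class y} ->
  exists2 v, v \in S & #|[set w in S | uadj a v w]| <= 2.
Proof.
move=> S_nonempty homog; have /set0Pn[v0 v0S] := S_nonempty; set L := path_of v0.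
have same x : x \in S -> path_of x = L /\ pos x = pos v0 %[mod K].
  by move=> xS; case: (homog x v0 xS v0S) => eq_idx eq_mod; rewrite /L /path_of eq_idx.
have nth_pos x : x \in S -> nth v0 L (pos x) = x.
  by move=> /same[eqL _]; rewrite /pos eqL nth_index // -eqL.
have pos_lt x : x \in S -> pos x < size L.
  by move=> /same[eqL _]; rewrite /pos eqL index_mem -eqL.
apply: (low_degree_vertex (uadj_sym a) (uadj_irr ha) (h := pos)) => //.
  by move=> x y xS yS eq_pos; rewrite -(nth_pos x) // eq_pos nth_pos.
move=> x1 x2 x3 x4 x1S x2S x3S x4S /andP[lt12 lt23] lt34 u13 u24; apply: no_subdiv.
have gap x y : x \in S -> y \in S -> pos x < pos y -> K <= pos y - pos x.
  move=> xS yS lt_xy; apply: eq_mod_leq_subn => //.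
  by rewrite (same x xS).2 (same y yS).2.
apply: (@crossing_chords_subdiv _ _ (nth v0 L) (size L) _ _ _ _
  (pos x1) (pos x2) (pos x3) (pos x4)).
- by have /(sortedP v0) := allP Ls_sorted _ (path_of_in v0).
- move=> i j; rewrite !inE => i_lt j_lt /eqP.
  by rewrite nth_uniq // => [/eqP //|]; apply: uniq_flatten_mem Ls_uniq (path_of_in v0).
- by rewrite lt12.
- by rewrite lt34 pos_lt.
- exact: gap.
- exact: gap.
- by rewrite !nth_pos.
- by rewrite !nth_pos.
Qed.

Lemma chi_le_path_partition : chi ha <= 3 * size Ls * K.
Proof.
have := colorable_by_classes ha path_class_low_degree.
by rewrite card_prod !card_ord mulnC mulnA => /(chi_le ha).
Qed.

End PathPartition.

Theorem corollary1 (T : finType) (a : rel T) (ha : irreflexive a)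
    (hanti : forall x y, a x y -> ~~ a y x) (k1 k2 : nat) :
  0 < k1 -> 0 < k2 -> ~ has_subdiv_C a k1 k2 ->
  chi ha <= 3 * alpha a * maxn k1 k2.
Proof.
move=> k1_gt0 _ no_subdiv.
have K_gt0 : 0 < maxn k1 k2 by rewrite leq_max k1_gt0.
have [Ps [[Ps_path Ps_uniq Ps_cover] size_Ps]] := gallai_milgram ha.
have Ls_cover v : v \in flatten [seq p.1 :: p.2 | p <- Ps] by rewrite (Ps_cover v) inE.
have Ls_sorted : all (sorted a) [seq p.1 :: p.2 | p <- Ps] by rewrite all_map.
apply: leq_trans (chi_le_path_partition ha K_gt0 no_subdiv Ps_uniq Ls_cover Ls_sorted) _.
by rewrite size_map leq_mul2r leq_mul2l size_Ps !orbT.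
Qed.
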